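(* Let $(\mathbb S,+,\cdot)$ be an S-Ring. Then its Unity is unique and equals $1$; that is, $e=1$ is the unique Unity of $(\mathbb S,+,\cdot)$.
   Context: An S-Structure is a triple $(\mathbb S,+,\cdot)$ where $\mathbb S$ is a set and $+,\cdot$ are binary operations on $\mathbb S$ such that: $(\mathbb S,+)$ is a commutative group with identity $0$ (the inverse of $s$ is written $-s$, and $s-t:=s+(-t)$); $\mathbb S$ is closed under $\cdot$; and there exists $s\in\mathbb S$ with $0\cdot s\neq 0$ or $s\cdot 0\neq 0$. Multiplication binds tighter than addition. The structures considered come with a distinguished element of $\mathbb S$ denoted $1$. It is Commutative if $s\cdot t=t\cdot s$ for all $s,t$. For a Commutative S-Structure and $\alpha\in\mathbb S$, put $\mathbb S_\alpha=\{s\in\mathbb S:0\cdot s=s\cdot 0=\alpha\}$ and $\Lambda=\{\alpha\in\mathbb S:\mathbb S_\alpha\neq\emptyset\}$. Wheel Distributive: $s\cdot(t+r)+(s\cdot 0)=(s\cdot t)+(s\cdot r)$ for all $s,t,r\in\mathbb S$. S-Associative: for all $m,n\in\mathbb S_0$ and $s\in\mathbb S$, $m\cdot(n\cdot s)=(m\cdot n)\cdot s-([(m-1)\cdot(n-1)]\cdot(0\cdot s))$. Base: if $\mathbb S_0\neq\emptyset$ and $\alpha\in\Lambda$, $q\in\mathbb S_\alpha$ is a Base for $\mathbb S_\alpha$ if $q+\beta\in\mathbb S_\alpha$ for all $\beta\in\mathbb S_0$ and every $s\in\mathbb S_\alpha$ equals $q+\beta$ for some $\beta\in\mathbb S_0$.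 Coordinated: $\mathbb S_0\neq\emptyset$ and every $\mathbb S_\alpha$ with $\alpha\in\Lambda$ has a Base. Standard Bases: a Coordinated Commutative S-Structure has Standard Bases if there is a specified element $q_0(1)\in\mathbb S_1$ which is a Base for $\mathbb S_1$, and for every $\alpha\in\Lambda$ the element $q_0(\alpha):=\alpha\cdot(q_0(1)+1)-1$ lies in $\mathbb S_\alpha$ and is a Base for $\mathbb S_\alpha$. An Essential S-Structure is an S-Structure that is Commutative, Wheel Distributive, S-Associative, has Standard Bases (in particular is Coordinated), satisfies $0,1\in\mathbb S_0$, and satisfies $\mathbb S_0=\{1\cdot x:x\in\mathbb S_0\}$. A Unity of a Commutative S-Structure is an element $e\in\Lambda$ with $e\cdot s=s\cdot e=s$ for all $s\in\mathbb S$. An S-Ring is an Essential S-Structure which has a Unity. *)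

(* An S-Structure is modelled as a carrier S : zmodType
   (giving the commutative group (S,+) with 0, -s, s - t), together with an
   arbitrary binary operation [mul] (closure under . is automatic for a
   function S -> S -> S) and a distinguished element [one] ("1"). *)
From HB Require Import structures.
From mathcomp Require Import all_boot all_algebra.
Set Implicit Arguments. Unset Strict Implicit. Unset Printing Implicit Defensive.
Import GRing.Theory.
Local Open Scope ring_scope.

Section SStructures.
Variables (S : zmodType) (mul : S -> S -> S) (one : S).

Definition S_structure : Prop :=
  exists s : S, mul 0 s <> 0 \/ mul s 0 <> 0.

Definition Commutative : Prop := forall s t, mul s t = mul t s.

Definition S_ (alpha s : S) : Prop := mul 0 s = alpha /\ mul s 0 = alpha.
Definition Lambda (alpha : S) : Prop := exists s, S_ alpha s.

Definition Wheel_Distributive : Prop :=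
  forall s t r, mul s (t + r) + mul s 0 = mul s t + mul s r.

Definition S_Associative : Prop :=
  forall m n s, S_ 0 m -> S_ 0 n ->
    mul m (mul n s) = mul (mul m n) s - mul (mul (m - one) (n - one)) (mul 0 s).

(* q is a Base for S_alpha (assuming S_0 nonempty, alpha in Lambda) *)
Definition is_Base (alpha q : S) : Prop :=
  S_ alpha q /\
  (forall beta, S_ 0 beta -> S_ alpha (q + beta)) /\
  (forall s, S_ alpha s -> exists2 beta, S_ 0 beta & s = q + beta).

Definition Coordinated : Prop :=
  (exists s, S_ 0 s) /\ (forall alpha, Lambda alpha -> exists q, is_Base alpha q).

Definition q0 (q01 alpha : S) : S := mul alpha (q01 + one) - one.

Definition Standard_Bases : Prop :=
  Coordinated /\
  exists q01 : S, S_ one q01 /\ is_Base one q01 /\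
    forall alpha, Lambda alpha ->
      S_ alpha (q0 q01 alpha) /\ is_Base alpha (q0 q01 alpha).

Definition Essential : Prop :=
  S_structure /\ Commutative /\ Wheel_Distributive /\ S_Associative /\
  Standard_Bases /\ S_ 0 0 /\ S_ 0 one /\
  (forall s, S_ 0 s <-> exists x, S_ 0 x /\ s = mul one x).

Definition is_Unity (e : S) : Prop :=
  Lambda e /\ forall s, mul e s = s /\ mul s e = s.

Definition S_Ring : Prop := Essential /\ exists e, is_Unity e.

End SStructures.

From HB Require Import structures.
From mathcomp Require Import all_boot all_algebra.
Set Implicit Arguments. Unset Strict Implicit. Unset Printing Implicit Defensive.
Local Open Scope ring_scope.
Import GRing.Theory.

(* A Unity e fixes q0(1) + 1, so the standard base q0(e) of S_e is q0(1), which
   lies in S_1; since the classes S_alpha are disjoint, e = 1. *)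

Section UnityOfSStructure.
Variables (S : zmodType) (mul : S -> S -> S) (one : S).

Lemma S_level_unique (alpha beta s : S) :
  S_ mul alpha s -> S_ mul beta s -> alpha = beta.
Proof. by move=> [<- _] [<- _]. Qed.

Lemma q0_unity (q01 e : S) : is_Unity mul e -> q0 mul one q01 e = q01.
Proof. by move=> [_ unit_e]; rewrite /q0 (proj1 (unit_e _)) addrK. Qed.

Lemma standard_bases_unity_eq (e : S) :
  Standard_Bases mul one -> is_Unity mul e -> e = one.
Proof.
move=> [_ [q01 [q01_one [_ std]]]] unit_e.
have [q0e_e _] := std e unit_e.1.
by rewrite q0_unity // in q0e_e; apply: S_level_unique q0e_e q01_one.
Qed.

End UnityOfSStructure.

Theorem proposition3p2p1 (S : zmodType) (mul : S -> S -> S) (one : S) :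
  S_Ring mul one ->
  is_Unity mul one /\ (forall e : S, is_Unity mul e -> e = one).
Proof.
move=> [[_ [_ [_ [_ [std _]]]]] [e unit_e]].
split; last by move=> e'; apply: standard_bases_unity_eq std.
by rewrite -(standard_bases_unity_eq std unit_e).
Qed.
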